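(* Let $G$ be a discrete group and let $X$ be a minimal, essentially free $G$-flow. Then $\tilde S_G(X)$ is a free $G$-flow. Moreover, if $G$ is countable, then $\tilde S_G(X)$ admits a metrizable factor which is also free.
   Context: A $G$-flow is essentially free if for every $g\neq e$ the set of points fixed by $g$ has empty interior, and free if every point has trivial stabilizer. For a minimal $G$-flow $X$ ($G$ discrete), $\tilde S_G(X)$ denotes the Stone space of the Boolean algebra of regular open subsets of $X$, with the induced $G$-action; the map $\pi_X\colon\tilde S_G(X)\to X$ sends an ultrafilter $p$ to the unique $x\in X$ all of whose regular open neighborhoods belong to $p$. ($\tilde S_G(X)$ is the universal highly proximal extension of $X$.) A factor of a flow $Y$ is a flow $Z$ with a continuous surjective $G$-map $Y\to Z$. *)

From Stdlib Require Import Reals List.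
Open Scope R_scope.

Set Implicit Arguments.

Definition is_group (G : Type) (mul : G -> G -> G) (inv : G -> G) (e : G) : Prop :=
  (forall a b c, mul a (mul b c) = mul (mul a b) c) /\
  (forall a, mul e a = a) /\ (forall a, mul a e = a) /\
  (forall a, mul (inv a) a = e) /\ (forall a, mul a (inv a) = e).

Definition countable_type (G : Type) : Prop :=
  exists f : nat -> G, forall g, exists n, f n = g.

Section Topology.
Variable T : Type.
Variable op : (T -> Prop) -> Prop.

Definition is_topology : Prop :=
  op (fun _ => True) /\ op (fun _ => False) /\
  (forall U V, op U -> op V -> op (fun x => U x /\ V x)) /\
  (forall F : (T -> Prop) -> Prop, (forall U, F U -> op U) ->
      op (fun x => exists U, F U /\ U x)).

Definition compact : Prop :=
  forall F : (T -> Prop) -> Prop,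
    (forall U, F U -> op U) -> (forall x, exists U, F U /\ U x) ->
    exists l : list (T -> Prop),
      (forall U, In U l -> F U) /\ (forall x, exists U, In U l /\ U x).

Definition hausdorff : Prop :=
  forall x y, x <> y -> exists U V, op U /\ op V /\ U x /\ V y /\
    (forall z, ~ (U z /\ V z)).

Definition interior (A : T -> Prop) (x : T) : Prop :=
  exists U, op U /\ U x /\ (forall y, U y -> A y).

Definition closure (A : T -> Prop) (x : T) : Prop :=
  forall U, op U -> U x -> exists y, U y /\ A y.

Definition regular_open (U : T -> Prop) : Prop :=
  op U /\ (forall x, interior (closure U) x <-> U x).

(* Boolean complement in the algebra of regular open sets: int (X \ U) *)
Definition ro_compl (U : T -> Prop) : T -> Prop := interior (fun x => ~ U x).

(* p is an ultrafilter of the Boolean algebra RO(T) of regular open sets.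
   Elements of RO(T) are sets up to extensional equality, hence the
   extensionality clause. *)
Definition ro_ultrafilter (p : (T -> Prop) -> Prop) : Prop :=
  (forall U, p U -> regular_open U) /\
  (forall U V, p U -> (forall x, U x <-> V x) -> p V) /\
  p (fun _ => True) /\
  ~ p (fun _ => False) /\
  (forall U V, p U -> p V -> p (fun x => U x /\ V x)) /\
  (forall U V, p U -> regular_open V -> (forall x, U x -> V x) -> p V) /\
  (forall U, regular_open U -> p U \/ p (ro_compl U)).

End Topology.

Definition continuous (A B : Type) (opA : (A -> Prop) -> Prop)
  (opB : (B -> Prop) -> Prop) (f : A -> B) : Prop :=
  forall V, opB V -> opA (fun a => V (f a)).

Section Flows.
Variables (G : Type) (mul : G -> G -> G) (inv : G -> G) (e : G).

(* X is a G-flow: compact Hausdorff space with a continuous action of the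
   discrete group G (i.e. each act g is continuous). *)
Definition is_flow (X : Type) (op : (X -> Prop) -> Prop) (act : G -> X -> X) : Prop :=
  is_topology op /\ compact op /\ hausdorff op /\
  (forall g, continuous op op (act g)) /\
  (forall x, act e x = x) /\
  (forall g h x, act (mul g h) x = act g (act h x)).

Definition minimal_flow (X : Type) (op : (X -> Prop) -> Prop) (act : G -> X -> X) : Prop :=
  forall x U, op U -> (exists y, U y) -> exists g, U (act g x).

Definition free_flow (X : Type) (act : G -> X -> X) : Prop :=
  forall g x, act g x = x -> g = e.

Definition essentially_free (X : Type) (op : (X -> Prop) -> Prop) (act : G -> X -> X) : Prop :=
  forall g, g <> e -> forall x, ~ interior op (fun y => act g y = y) x.

Variables (X : Type) (op : (X -> Prop) -> Prop) (act : G -> X -> X).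

Definition SG : Type := { p : (X -> Prop) -> Prop | ro_ultrafilter op p }.

(* Stone topology: basic open sets N_U = {p | U in p}, U regular open *)
Definition SG_open (V : SG -> Prop) : Prop :=
  forall p, V p -> exists U, regular_open op U /\ proj1_sig p U /\
    (forall q : SG, proj1_sig q U -> V q).

(* Induced action: g.p = {g U | U in p}; so U in g.p iff g^{-1} U in p.
   SG_act_rel g p q  means  q = g.p . *)
Definition SG_act_rel (g : G) (p q : SG) : Prop :=
  forall U, proj1_sig q U <-> proj1_sig p (fun x => U (act g x)).

Definition SG_free : Prop :=
  forall g (p : SG), SG_act_rel g p p -> g = e.

End Flows.

Definition is_metric (Z : Type) (d : Z -> Z -> R) : Prop :=
  (forall x y, 0 <= d x y) /\ (forall x y, d x y = 0 <-> x = y) /\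
  (forall x y, d x y = d y x) /\ (forall x y z, d x z <= d x y + d y z).

Definition metric_induces (Z : Type) (d : Z -> Z -> R) (opZ : (Z -> Prop) -> Prop) : Prop :=
  forall V, opZ V <-> (forall z, V z -> exists eps, 0 < eps /\
                          forall w, d z w < eps -> V w).

Definition metrizable (Z : Type) (opZ : (Z -> Prop) -> Prop) : Prop :=
  exists d : Z -> Z -> R, is_metric d /\ metric_induces d opZ.

Definition SG_factor (G : Type) (mul : G -> G -> G) (inv : G -> G) (e : G)
  (X : Type) (op : (X -> Prop) -> Prop) (act : G -> X -> X)
  (Z : Type) (opZ : (Z -> Prop) -> Prop) (actZ : G -> Z -> Z) : Prop :=
  is_flow mul e opZ actZ /\
  exists pi : SG op -> Z,
    continuous (SG_open (op:=op)) opZ pi /\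
    (forall z, exists p, pi p = z) /\
    (forall g p q, SG_act_rel act g p q -> pi q = actZ g (pi p)).

(* Freeness (Frolik's argument): for g <> e, take by Zorn's lemma a maximal
   open set A with A /\ g^{-1}A empty.  Essential freeness makes A, gA and
   g^{-1}A have dense union, so every ultrafilter of RO(X) contains one of
   their regularizations, each moved off itself by g; an ultrafilter fixed
   by g cannot contain such a set.

   Metrizable factor: enumerate G, and collect the G-translates of these
   three-set "displacing covers" into a countable G-invariant family (b n).
   The map p |-> {n | b n in p} into the Cantor space nat -> Prop is a
   continuous equivariant surjection onto a compact metrizable flow (its
   image), which is free because b contains a displacing cover for each g. *)
From Pilot Require Import Defs.
From Stdlib Require Import Reals List.
From Stdlib Require Import Lra Lia Classical ClassicalEpsilon
  FunctionalExtensionality PropExtensionality ProofIrrelevance Cantor.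
(* Re-imported so that its topological notions shadow the homonyms of Reals. *)
From Pilot Require Import Defs.
Close Scope R_scope.

Definition subset {T : Type} (A B : T -> Prop) : Prop := forall x, A x -> B x.

Lemma set_ext {T : Type} (A B : T -> Prop) : (forall x, A x <-> B x) -> A = B.
Proof.
  intro H; apply functional_extensionality; intro x.
  apply propositional_extensionality, H.
Qed.

(* Zorn's lemma for a family P of subsets of T ordered by inclusion, proved
   from choice by the Bourbaki-Witt tower argument: the least family that
   contains f0 and is closed under a choice of strict successor and under
   suprema of chains is itself a chain, and its supremum is maximal. *)
Section Zorn.
Variables (T : Type) (P : (T -> Prop) -> Prop) (f0 : T -> Prop).

Definition chain (C : (T -> Prop) -> Prop) : Prop :=
  forall A B, C A -> C B -> subset A B \/ subset B A.

Definition union (C : (T -> Prop) -> Prop) : T -> Prop :=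
  fun t => exists A, C A /\ A t.

Definition succ (A : T -> Prop) : T -> Prop :=
  match excluded_middle_informative
          (exists B, P B /\ subset A B /\ ~ subset B A) with
  | left H => proj1_sig (constructive_indefinite_description _ H)
  | right _ => A
  end.

Lemma succ_spec A :
  (P A -> P (succ A)) /\ subset A (succ A) /\
  ((exists B, P B /\ subset A B /\ ~ subset B A) -> ~ subset (succ A) A).
Proof.
  unfold succ; destruct excluded_middle_informative as [H|H].
  - destruct (constructive_indefinite_description _ H) as [B [PB [AB BA]]].
    simpl; repeat split; auto.
  - repeat split; auto; intros t At; exact At.
Qed.

Lemma succ_incr A : subset A (succ A).
Proof. apply succ_spec. Qed.

Definition sup (C : (T -> Prop) -> Prop) : T -> Prop := fun t => f0 t \/ union C t.

Definition tower (Q : (T -> Prop) -> Prop) : Prop :=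
  Q f0 /\ (forall A, Q A -> Q (succ A)) /\
  (forall C, (forall A, C A -> Q A) -> chain C -> Q (sup C)).

Definition M (A : T -> Prop) : Prop := forall Q, tower Q -> Q A.

Lemma M_tower : tower M.
Proof.
  split; [|split].
  - intros Q HQ; apply HQ.
  - intros A MA Q HQ; apply HQ, MA, HQ.
  - intros C HC Hch Q HQ; apply HQ; auto.
    intros A CA; apply HC, HQ; exact CA.
Qed.

Lemma M_ind (R : (T -> Prop) -> Prop) :
  tower (fun A => M A /\ R A) -> forall A, M A -> R A.
Proof. intros Ht A MA; apply (MA _ Ht). Qed.

Lemma M_ind_chain (R : (T -> Prop) -> Prop) C :
  (forall A, C A -> M A /\ R A) -> chain C -> M (sup C).
Proof. intros HC Hch; apply M_tower; auto; intros A CA; apply HC, CA. Qed.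

Lemma M_above_f0 : forall A, M A -> subset f0 A.
Proof.
  apply M_ind; split; [|split].
  - split; [apply M_tower | intros t h; exact h].
  - intros A [MA HA]; split; [apply M_tower, MA|].
    intros t h; apply succ_incr, HA, h.
  - intros C HC Hch; split; [apply (M_ind_chain _ _ HC Hch)|].
    intros t h; left; exact h.
Qed.

Definition extreme (c : T -> Prop) : Prop :=
  forall A, M A -> subset A c -> ~ subset c A -> subset (succ A) c.

Lemma extreme_compare c :
  M c -> extreme c -> forall A, M A -> subset A c \/ subset (succ c) A.
Proof.
  intros Mc Ec; apply M_ind; split; [|split].
  - split; [apply M_tower|]; left; apply M_above_f0, Mc.
  - intros A [MA [Ac|cA]]; (split; [apply M_tower, MA|]).
    + destruct (classic (subset c A)) as [cA|ncA].
      * right. assert (A = c) as -> by (apply set_ext; split; auto).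
        intros t h; exact h.
      * left; apply Ec; auto.
    + right; intros t h; apply succ_incr, cA, h.
  - intros C HC Hch; split; [apply (M_ind_chain _ _ HC Hch)|].
    destruct (classic (exists A, C A /\ subset (succ c) A)) as [[A [CA sA]]|N].
    + right; intros t h; right; exists A; auto.
    + left; intros t [h|[A [CA At]]]; [apply M_above_f0; auto|].
      destruct (proj2 (HC A CA)) as [Ac|sA]; [apply Ac, At|].
      exfalso; apply N; eauto.
Qed.

Lemma all_extreme : forall c, M c -> extreme c.
Proof.
  apply M_ind; split; [|split].
  - split; [apply M_tower|]; intros A MA _ nA; exfalso; apply nA, M_above_f0, MA.
  - intros c [Mc Ec]; split; [apply M_tower, Mc|].
    intros A MA Asc nsA.
    destruct (extreme_compare c Mc Ec A MA) as [Ac|scA]; [|contradiction].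
    destruct (classic (subset c A)) as [cA|ncA].
    + assert (A = c) as -> by (apply set_ext; split; auto); intros t h; exact h.
    + intros t h; apply succ_incr; exact (Ec A MA Ac ncA t h).
  - intros C HC Hch; split; [apply (M_ind_chain _ _ HC Hch)|].
    intros A MA AsC nCA.
    assert (exists c, C c /\ ~ subset c A) as [c [Cc ncA]].
    { apply NNPP; intro N; apply nCA; intros t [h|[c [Cc ct]]].
      - apply M_above_f0; auto.
      - apply NNPP; intro Nt; apply N; exists c; split; [exact Cc|].
        intro I; apply Nt, I, ct. }
    destruct (HC c Cc) as [Mc Ec].
    destruct (extreme_compare c Mc Ec A MA) as [Ac|scA].
    + intros t h; right; exists c; split; [exact Cc|]; apply (Ec A MA); auto.
    + exfalso; apply ncA; intros t h; apply scA, succ_incr, h.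
Qed.

Lemma M_chain : chain M.
Proof.
  intros A B MA MB.
  destruct (extreme_compare B MB (all_extreme B MB) A MA) as [AB|sBA]; auto.
  right; intros t h; apply sBA, succ_incr, h.
Qed.

Hypothesis P_f0 : P f0.
Hypothesis P_chain : forall C, (forall A, C A -> P A) -> chain C ->
  (exists A, C A) -> P (union C).

Lemma M_P : forall A, M A -> P A.
Proof.
  apply M_ind; split; [|split].
  - split; [apply M_tower|exact P_f0].
  - intros A [MA PA]; split; [apply M_tower, MA|apply succ_spec, PA].
  - intros C HC Hch; split; [apply (M_ind_chain _ _ HC Hch)|].
    destruct (classic (exists A, C A)) as [[A CA]|N].
    + assert (sup C = union C) as ->.
      { apply set_ext; intro t; split; [|intro h; right; exact h].
        intros [h|h]; [|exact h].
        exists A; split; [exact CA|]; apply M_above_f0; [apply HC, CA|exact h]. }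
      apply P_chain; [intros B CB; apply HC, CB|exact Hch|exists A; exact CA].
    + assert (sup C = f0) as ->; [|exact P_f0].
      apply set_ext; intro t; split; [|intro h; left; exact h].
      intros [h|[B [CB _]]]; [exact h|exfalso; eauto].
Qed.

Theorem zorn : exists m, P m /\ subset f0 m /\ forall B, P B -> subset m B -> subset B m.
Proof.
  pose (m := sup M).
  assert (Mm : M m) by (apply M_tower; [intros A h; exact h|exact M_chain]).
  exists m; split; [apply M_P, Mm|split; [intros t h; left; exact h|]].
  intros B PB mB; apply NNPP; intro N.
  apply (proj2 (proj2 (succ_spec m))); [exists B; auto|].
  intros t h; right; exists (succ m); split; [exact (proj1 (proj2 M_tower) m Mm)|exact h].
Qed.

End Zorn.

Section Topology.
Variables (X : Type) (op : (X -> Prop) -> Prop).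
Hypothesis Ht : is_topology op.

Lemma op_True : op (fun _ => True). Proof. apply Ht. Qed.
Lemma op_False : op (fun _ => False). Proof. apply Ht. Qed.
Lemma op_and U V : op U -> op V -> op (fun x => U x /\ V x). Proof. apply Ht. Qed.

Lemma op_local (A : X -> Prop) :
  (forall x, A x -> exists U, op U /\ U x /\ subset U A) -> op A.
Proof.
  intro H.
  assert (A = fun x => exists U, (op U /\ subset U A) /\ U x) as ->.
  { apply set_ext; intro x; split.
    - intro Ax; destruct (H x Ax) as [U [oU [Ux sU]]]; eauto.
    - intros [U [[_ sU] Ux]]; auto. }
  apply Ht; intros U [oU _]; exact oU.
Qed.

Lemma int_open A : op (interior op A).
Proof.
  apply op_local; intros x [U [oU [Ux sU]]].
  exists U; repeat split; auto; intros y Uy; exists U; auto.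
Qed.

Lemma int_sub A : subset (interior op A) A.
Proof. intros x [U [_ [Ux sU]]]; auto. Qed.

Lemma open_int A : op A -> subset A (interior op A).
Proof. intros oA x Ax; exists A; auto. Qed.

Lemma int_mono A B : subset A B -> subset (interior op A) (interior op B).
Proof. intros I x [U [oU [Ux sU]]]; exists U; repeat split; auto. Qed.

Lemma sub_cl A : subset A (closure op A).
Proof. intros x Ax U oU Ux; eauto. Qed.

Lemma cl_mono A B : subset A B -> subset (closure op A) (closure op B).
Proof. intros I x Hx U oU Ux; destruct (Hx U oU Ux) as [y [Uy Ay]]; eauto. Qed.

Lemma cl_idem A B : subset A (closure op B) -> subset (closure op A) (closure op B).
Proof.
  intros I x Hx O oO Ox; destruct (Hx O oO Ox) as [y [Oy Ay]].
  exact (I y Ay O oO Oy).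
Qed.

Lemma open_disj_cl O A x :
  op O -> O x -> closure op A x -> (forall y, O y -> A y -> False) -> False.
Proof. intros oO Ox c H; destruct (c O oO Ox) as [y [Oy Ay]]; eauto. Qed.

Definition reg (U : X -> Prop) : X -> Prop := interior op (closure op U).

Lemma reg_mono A B : subset A B -> subset (reg A) (reg B).
Proof. intro I; apply int_mono, cl_mono, I. Qed.

Lemma regular_open_intro U : op U -> subset (reg U) U -> regular_open op U.
Proof.
  intros oU sU; split; [exact oU|intro x; split; [apply sU|]].
  intro Ux; apply (int_mono U); [apply sub_cl|apply open_int; auto].
Qed.

Lemma reg_RO U : regular_open op (reg U).
Proof.
  apply regular_open_intro; [apply int_open|].
  apply int_mono, cl_idem, int_sub.
Qed.

Lemma open_sub_reg U : op U -> subset U (reg U).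
Proof. intros oU x Ux; exists U; repeat split; auto; apply sub_cl. Qed.

Lemma RO_open U : regular_open op U -> op U.
Proof. intros [oU _]; exact oU. Qed.

Lemma RO_reg U : regular_open op U -> reg U = U.
Proof. intros [_ h]; apply set_ext, h. Qed.

Lemma RO_True : regular_open op (fun _ => True).
Proof. apply regular_open_intro; [apply op_True|intros x _; exact I]. Qed.

Lemma RO_False : regular_open op (fun _ => False).
Proof.
  apply regular_open_intro; [apply op_False|].
  intros x h; destruct (int_sub _ x h (fun _ => True) op_True I) as [y [_ []]].
Qed.

Lemma RO_inter U V : regular_open op U -> regular_open op V ->
  regular_open op (fun x => U x /\ V x).
Proof.
  intros RU RV; apply regular_open_intro; [apply op_and; apply RO_open; auto|].
  intros x h; split.
  - rewrite <- (RO_reg U RU); revert h; apply reg_mono; intros y [Uy _]; exact Uy.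
  - rewrite <- (RO_reg V RV); revert h; apply reg_mono; intros y [_ Vy]; exact Vy.
Qed.

Lemma compl_disj U x : ro_compl op U x -> U x -> False.
Proof. intros h Ux; exact (int_sub _ x h Ux). Qed.

Lemma open_sub_compl U W :
  op W -> (forall x, W x -> U x -> False) -> subset W (ro_compl op U).
Proof. intros oW H x Wx; exists W; repeat split; auto; intros y Wy Uy; exact (H y Wy Uy). Qed.

Lemma ro_compl_RO U : op U -> regular_open op (ro_compl op U).
Proof.
  intro oU; apply regular_open_intro; [apply int_open|].
  apply open_sub_compl; [apply int_open|].
  intros y h Uy; apply (open_disj_cl U _ y oU Uy (int_sub _ y h)).
  intros z Uz cz; exact (compl_disj U z cz Uz).
Qed.

End Topology.
Arguments reg {X} op U.

Section Ultrafilters.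
Variables (X : Type) (op : (X -> Prop) -> Prop).
Hypothesis Ht : is_topology op.

Section Basics.
Variable p : (X -> Prop) -> Prop.
Hypothesis Hp : ro_ultrafilter op p.

Lemma uf_RO U : p U -> regular_open op U. Proof. apply Hp. Qed.
Lemma uf_True : p (fun _ => True). Proof. apply Hp. Qed.
Lemma uf_and U V : p U -> p V -> p (fun x => U x /\ V x). Proof. apply Hp. Qed.
Lemma uf_up U V : p U -> regular_open op V -> subset U V -> p V. Proof. apply Hp. Qed.

Lemma uf_nonempty U : p U -> (forall x, U x -> False) -> False.
Proof.
  intros pU H; apply (proj1 (proj2 (proj2 (proj2 Hp)))).
  assert (U = fun _ => False) as <-; [|exact pU].
  apply set_ext; intro x; split; [apply H|intros []].
Qed.

Lemma uf_meet U V : p U -> p V -> (forall x, U x -> V x -> False) -> False.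
Proof. intros pU pV H; apply (uf_nonempty _ (uf_and _ _ pU pV)); intros x [Ux Vx]; eauto. Qed.

Lemma uf_compl U : regular_open op U -> ~ p U -> p (ro_compl op U).
Proof. intros R n; destruct (proj2 (proj2 (proj2 (proj2 (proj2 (proj2 Hp))))) U R); tauto. Qed.

Lemma uf_not_both U : p U -> p (ro_compl op U) -> False.
Proof. intros pU pC; apply (uf_meet _ _ pU pC); intros x Ux Cx; exact (compl_disj _ _ _ _ Cx Ux). Qed.

Lemma uf_join U1 U2 : regular_open op U1 -> regular_open op U2 ->
  p (reg op (fun x => U1 x \/ U2 x)) -> p U1 \/ p U2.
Proof.
  intros R1 R2 pU; apply NNPP; intro N.
  assert (c1 : p (ro_compl op U1)) by (apply uf_compl; auto).
  assert (c2 : p (ro_compl op U2)) by (apply uf_compl; auto).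
  apply (uf_meet _ _ pU (uf_and _ _ c1 c2)); intros x h [a b].
  apply (open_disj_cl X op (fun y => ro_compl op U1 y /\ ro_compl op U2 y)
           (fun y => U1 y \/ U2 y) x).
  - apply (op_and X op Ht); apply (int_open X op Ht).
  - split; auto.
  - exact (int_sub _ _ _ x h).
  - intros y [a' b'] [u|u]; [exact (compl_disj _ _ _ _ a' u)|exact (compl_disj _ _ _ _ b' u)].
Qed.

End Basics.

Definition ro_filter (p : (X -> Prop) -> Prop) : Prop :=
  (forall U, p U -> regular_open op U) /\ p (fun _ => True) /\ ~ p (fun _ => False) /\
  (forall U V, p U -> p V -> p (fun x => U x /\ V x)) /\
  (forall U V, p U -> regular_open op V -> subset U V -> p V).

Lemma ro_filter_adjoin m V : ro_filter m -> regular_open op V -> ~ m (ro_compl op V) ->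
  ro_filter (fun W => regular_open op W /\ exists Z, m Z /\ forall x, Z x -> V x -> W x).
Proof.
  intros [R [T [F [A U]]]] RV nC; split; [|split; [|split; [|split]]].
  - intros W [RW _]; exact RW.
  - split; [apply RO_True; auto|exists (fun _ => True); auto].
  - intros [_ [Z [mZ HZ]]]; apply nC, (U Z); auto.
    + apply ro_compl_RO, RO_open; auto.
    + apply open_sub_compl; [apply RO_open; auto|intros x a b; exact (HZ x a b)].
  - intros W1 W2 [R1 [Z1 [m1 H1]]] [R2 [Z2 [m2 H2]]]; split; [apply RO_inter; auto|].
    exists (fun x => Z1 x /\ Z2 x); split; auto; intros x [a b] c; split; auto.
  - intros W1 W2 [R1 [Z1 [m1 H1]]] R2 s; split; auto; exists Z1; split; auto.
Qed.

Lemma ultrafilter_extension f0 : ro_filter f0 -> exists q, ro_ultrafilter op q /\ subset f0 q.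
Proof.
  intro Hf0.
  destruct (zorn _ ro_filter f0) as [m [Fm [s0 Mmax]]]; auto.
  - intros C HC Hch [A0 CA0]; split; [|split; [|split; [|split]]].
    + intros V [A [CA AV]]; exact (proj1 (HC A CA) V AV).
    + exists A0; split; auto; apply (HC A0 CA0).
    + intros [A [CA AF]]; exact (proj1 (proj2 (proj2 (HC A CA))) AF).
    + intros V W [A [CA AV]] [B [CB BW]].
      destruct (Hch A B CA CB) as [I|I].
      * destruct (HC B CB) as [_ [_ [_ [andB _]]]].
        exists B; split; [exact CB|apply andB; [apply I, AV|exact BW]].
      * destruct (HC A CA) as [_ [_ [_ [andA _]]]].
        exists A; split; [exact CA|apply andA; [exact AV|apply I, BW]].
    + intros V W [A [CA AV]] RW sVW; exists A; split; auto; apply (HC A CA) with V; auto.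
  - exists m; split; [|exact s0].
    destruct Fm as [R [T [F [A U]]]].
    split; [auto|split; [|repeat split; auto]].
    + intros V W mV E; assert (V = W) as <- by (apply set_ext; auto); exact mV.
    + intros V RV; destruct (classic (m (ro_compl op V))) as [h|h]; [right; exact h|left].
      apply (Mmax _ (ro_filter_adjoin m V (conj R (conj T (conj F (conj A U)))) RV h)).
      * intros W mW; split; auto; exists W; split; auto.
      * split; auto; exists (fun _ => True); split; auto.
Qed.

Definition fin_covered (F : (SG op -> Prop) -> Prop) (U : X -> Prop) : Prop :=
  regular_open op U /\ exists l, (forall O, In O l -> F O) /\
    forall q : SG op, proj1_sig q U -> exists O, In O l /\ O q.

Lemma fin_covered_join F U1 U2 : fin_covered F U1 -> fin_covered F U2 ->
  fin_covered F (reg op (fun x => U1 x \/ U2 x)).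
Proof.
  unfold fin_covered; intros [R1 [l1 [F1 C1]]] [R2 [l2 [F2 C2]]]; split; [apply (reg_RO X op Ht)|].
  exists (l1 ++ l2); split.
  - intros O h; apply in_app_or in h as [h|h]; auto.
  - intros [q Hq] h; simpl in h.
    destruct (uf_join q Hq U1 U2 R1 R2 h) as [a|a];
      [destruct (C1 (exist _ q Hq) a) as [O [iO Oq]]|destruct (C2 (exist _ q Hq) a) as [O [iO Oq]]];
      exists O; split; auto; apply in_or_app; auto.
Qed.

Lemma fin_covered_compl_filter F :
  ~ (exists l, (forall O, In O l -> F O) /\ (forall q : SG op, exists O, In O l /\ O q)) ->
  ro_filter (fun V => regular_open op V /\
    exists U, fin_covered F U /\ subset (ro_compl op U) V).
Proof.
  intros Nfin; split; [|split; [|split; [|split]]].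
  - intros V [h _]; exact h.
  - split; [apply RO_True; auto|exists (fun _ => False); split; [|intros x _; exact I]].
    split; [apply RO_False; auto|exists nil; split; [intros O []|]].
    intros [q Hq] h; exfalso; exact (proj1 (proj2 (proj2 (proj2 Hq))) h).
  - intros [_ [U [[RU [l [lF lc]]] s]]]; apply Nfin; exists l; split; auto.
    intros [q Hq]; apply lc; simpl.
    destruct (classic (q U)) as [h|h]; [exact h|exfalso].
    apply (uf_nonempty q Hq _ (uf_compl q Hq U RU h)); intros x c; exact (s x c).
  - intros V1 V2 [r1 [U1 [I1 s1]]] [r2 [U2 [I2 s2]]]; split; [apply RO_inter; auto|].
    exists (reg op (fun x => U1 x \/ U2 x)); split; [apply fin_covered_join; auto|].
    assert (sc : forall U, regular_open op U -> subset U (reg op (fun x => U1 x \/ U2 x)) ->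
              subset (ro_compl op (reg op (fun x => U1 x \/ U2 x))) (ro_compl op U)).
    { intros U RU sU; apply int_mono; intros y ny u; apply ny, sU, u. }
    intros x h; split.
    + apply s1; revert x h; apply sc; [apply I1|].
      intros y u; apply (reg_mono _ _ U1); [intros z hz; left; exact hz|apply open_sub_reg; auto].
      apply RO_open, I1.
    + apply s2; revert x h; apply sc; [apply I2|].
      intros y u; apply (reg_mono _ _ U2); [intros z hz; right; exact hz|apply open_sub_reg; auto].
      apply RO_open, I2.
  - intros V W [r [U [IU s]]] RW sVW; split; auto; exists U; split; auto; intros x h; auto.
Qed.

Lemma SG_compact : compact (SG_open (op := op)).
Proof.
  intros F HF Hcov; apply NNPP; intro Nfin.
  destruct (ultrafilter_extension _ (fin_covered_compl_filter F Nfin)) as [q [Hq sq]].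
  destruct (Hcov (exist _ q Hq)) as [O [FO Oq]].
  destruct (HF O FO _ Oq) as [U [RU [qU HU]]]; simpl in qU.
  apply (uf_not_both q Hq U qU), sq.
  split; [apply ro_compl_RO, RO_open; auto|exists U; split; [|intros x h; exact h]].
  split; [exact RU|exists (O :: nil); split].
  - intros O' [<-|[]]; exact FO.
  - intros q' h; exists O; split; [left; reflexivity|apply HU, h].
Qed.

End Ultrafilters.

Section Flow.
Variables (G : Type) (mul : G -> G -> G) (inv : G -> G) (e : G).
Hypothesis HG : is_group mul inv e.
Variables (X : Type) (op : (X -> Prop) -> Prop) (act : G -> X -> X).
Hypothesis Hflow : is_flow mul e op act.

Lemma flow_top : is_topology op. Proof. apply Hflow. Qed.
Lemma flow_haus : hausdorff op. Proof. apply Hflow. Qed.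
Lemma act_cont g : continuous op op (act g). Proof. apply Hflow. Qed.
Lemma act_e x : act e x = x. Proof. apply Hflow. Qed.
Lemma act_mul g h x : act (mul g h) x = act g (act h x). Proof. apply Hflow. Qed.

Lemma act_inv_l g x : act (inv g) (act g x) = x.
Proof. rewrite <- act_mul, (proj1 (proj2 (proj2 (proj2 HG)))); apply act_e. Qed.

Lemma act_inv_r g x : act g (act (inv g) x) = x.
Proof. rewrite <- act_mul, (proj2 (proj2 (proj2 (proj2 HG)))); apply act_e. Qed.

(* pre h U = h^{-1} U; with this convention U is in g.p iff pre g U is in p. *)
Definition pre (h : G) (U : X -> Prop) : X -> Prop := fun x => U (act h x).

Lemma pre_open h U : op U -> op (pre h U).
Proof. apply act_cont. Qed.

Lemma pre_pre g h U : pre h (pre g U) = pre (mul g h) U.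
Proof. apply set_ext; intro x; unfold pre; rewrite act_mul; tauto. Qed.

Lemma pre_e U : pre e U = U.
Proof. apply set_ext; intro x; unfold pre; rewrite act_e; tauto. Qed.

Lemma pre_interior h A : pre h (interior op A) = interior op (pre h A).
Proof.
  apply set_ext; intro x; unfold pre; split.
  - intros [O [oO [Ox sO]]]; exists (pre h O); repeat split; auto.
    apply pre_open, oO.
  - intros [O [oO [Ox sO]]]; exists (pre (inv h) O); repeat split.
    + apply pre_open, oO.
    + unfold pre; rewrite act_inv_l; exact Ox.
    + intros y Oy; pose proof (sO _ Oy) as h'; unfold pre in h'.
      rewrite act_inv_r in h'; exact h'.
Qed.

Lemma pre_closure h A : pre h (closure op A) = closure op (pre h A).
Proof.
  apply set_ext; intro x; unfold pre; split.
  - intros c O oO Ox.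
    destruct (c (pre (inv h) O)) as [y [Oy Ay]].
    + apply pre_open, oO.
    + unfold pre; rewrite act_inv_l; exact Ox.
    + exists (act (inv h) y); unfold pre; rewrite act_inv_r; auto.
  - intros c O oO Ox.
    destruct (c (pre h O) (pre_open h O oO) Ox) as [y [Oy Ay]]; eauto.
Qed.

Lemma pre_RO h U : regular_open op U -> regular_open op (pre h U).
Proof.
  intros RU; split; [apply pre_open, RO_open, RU|intro x].
  change (reg op (pre h U) x <-> pre h U x).
  unfold reg; rewrite <- pre_closure, <- pre_interior.
  unfold pre; fold (reg op U); rewrite (RO_reg X op U RU); tauto.
Qed.

Lemma pre_compl h U : pre h (ro_compl op U) = ro_compl op (pre h U).
Proof. apply pre_interior. Qed.

Lemma uf_translate (p : (X -> Prop) -> Prop) g :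
  ro_ultrafilter op p -> ro_ultrafilter op (fun U => p (pre g U)).
Proof.
  intro Hp; split; [|split; [|split; [|split; [|split; [|split]]]]].
  - intros U pU; assert (U = pre (inv g) (pre g U)) as ->.
    { rewrite pre_pre; apply set_ext; intro x; unfold pre.
      rewrite act_mul, act_inv_r; tauto. }
    apply pre_RO, (uf_RO X op p Hp), pU.
  - intros U V pU E; assert (U = V) as <- by (apply set_ext, E); exact pU.
  - exact (uf_True X op p Hp).
  - exact (proj1 (proj2 (proj2 (proj2 Hp)))).
  - intros U V pU pV; exact (uf_and X op p Hp _ _ pU pV).
  - intros U V pU RV sUV; apply (uf_up X op p Hp _ _ pU); [apply pre_RO, RV|].
    intros x h; apply sUV, h.
  - intros U RU; rewrite pre_compl; apply Hp, pre_RO, RU.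
Qed.

Definition moves_off (g : G) (B : X -> Prop) : Prop :=
  forall x, B x -> B (act g x) -> False.

Lemma uf_moves_off (p : (X -> Prop) -> Prop) g B :
  ro_ultrafilter op p -> p B -> p (pre g B) -> moves_off g B -> False.
Proof. intros Hp pB pgB Dg; exact (uf_meet X op p Hp _ _ pB pgB Dg). Qed.

Lemma moves_off_pre g h B : mul h g = mul g h -> moves_off g B -> moves_off g (pre h B).
Proof.
  intros comm Dg x Bhx Bhgx; apply (Dg (act h x) Bhx).
  unfold pre in Bhgx; rewrite <- act_mul, <- comm, act_mul; exact Bhgx.
Qed.

Lemma moves_off_reg g B : op B -> moves_off g B -> moves_off g (reg op B).
Proof.
  intros oB Dg x h1 h2.
  assert (oU : op (reg op B)) by (exact (int_open X op flow_top _)).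
  destruct (int_sub X op _ x h1 (fun z => reg op B z /\ pre g (reg op B) z)) as [y [[Uy gUy] By]].
  { apply (op_and X op flow_top); [exact oU|apply pre_open, oU]. }
  { split; auto. }
  destruct (int_sub X op _ _ gUy (pre (inv g) B)) as [w [Qw Bw]].
  { apply pre_open, oB. }
  { unfold pre; rewrite act_inv_l; exact By. }
  apply (Dg (act (inv g) w)); [exact Qw|rewrite act_inv_r; exact Bw].
Qed.

Definition displacing_cover (g : G) (c : nat -> X -> Prop) : Prop :=
  (forall i, regular_open op (c i) /\ moves_off g (c i)) /\
  forall p, ro_ultrafilter op p -> exists i, p (c i).

Section Frolik.
Hypothesis Hess : essentially_free e op act.
Variable g : G.
Hypothesis Hg : g <> e.

Lemma shrink_moved_off V x0 : op V -> V x0 ->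
  exists V', op V' /\ (exists y, V' y) /\ subset V' V /\ moves_off g V'.
Proof.
  intros oV Vx0.
  assert (exists y, V y /\ act g y <> y) as [y [Vy Hy]].
  { apply NNPP; intro N; apply (Hess g Hg x0); exists V; repeat split; auto.
    intros y Vy; apply NNPP; intro N2; apply N; eauto. }
  destruct (flow_haus y (act g y)) as [A [B [oA [oB [Ay [By AB]]]]]]; auto.
  exists (fun x => V x /\ A x /\ pre g B x); repeat split.
  - apply (op_and X op flow_top); auto; apply (op_and X op flow_top); auto; apply pre_open; auto.
  - exists y; repeat split; auto.
  - intros x [Vx _]; exact Vx.
  - intros x [_ [_ gBx]] [_ [gAx _]]; apply (AB (act g x)); split; auto.
Qed.

Definition open_moved_off (A : X -> Prop) : Prop := op A /\ moves_off g A.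

Lemma maximal_moved_off : exists A, open_moved_off A /\
  forall B, open_moved_off B -> subset A B -> subset B A.
Proof.
  destruct (zorn _ open_moved_off (fun _ => False)) as [A [PA [_ MA]]]; eauto.
  - split; [apply op_False, flow_top|intros x []].
  - intros C HC Hch _; split.
    + apply flow_top; intros U CU; apply HC, CU.
    + intros x [a [Ca ax]] [b [Cb bx]].
      destruct (Hch a b Ca Cb) as [I|I];
        [apply (proj2 (HC b Cb) x); auto|apply (proj2 (HC a Ca) x); auto].
Qed.

Lemma maximal_moved_off_dense A :
  open_moved_off A -> (forall B, open_moved_off B -> subset A B -> subset B A) ->
  forall V x0, op V -> V x0 ->
  exists y, V y /\ (A y \/ pre (inv g) A y \/ pre g A y).
Proof.
  intros [oA DA] MA V x0 oV Vx0; apply NNPP; intro N.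
  destruct (shrink_moved_off V x0 oV Vx0) as [V' [oV' [[y V'y] [sV DV']]]].
  assert (avoid : forall z, V' z -> A z \/ pre (inv g) A z \/ pre g A z -> False)
    by (intros z V'z W; apply N; exists z; auto).
  assert (PAV : open_moved_off (fun x => A x \/ V' x)).
  { split.
    - apply (op_local X op flow_top); intros x [Ax|V'x];
        [exists A|exists V']; repeat split; auto; intros z h; auto.
    - intros x [a|a] [b|b].
      + exact (DA x a b).
      + apply (avoid _ b); right; left; unfold pre; rewrite act_inv_l; exact a.
      + apply (avoid _ a); right; right; exact b.
      + exact (DV' x a b). }
  apply (avoid y V'y); left; apply (MA _ PAV); [intros z h; left; exact h|right; exact V'y].
Qed.

Lemma frolik_cover : exists c, displacing_cover g c.
Proof.
  destruct maximal_moved_off as [A [[oA DA] MA]].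
  assert (comm_inv : mul (inv g) g = mul g (inv g))
    by (destruct HG as [_ [_ [_ [li ri]]]]; rewrite li, ri; reflexivity).
  set (c := fun i => match i with
                     | 0 => reg op A | 1 => reg op (pre (inv g) A) | _ => reg op (pre g A) end).
  assert (Hc : forall i, exists B, c i = reg op B /\ op B /\ moves_off g B).
  { intros [|[|i]]; [exists A|exists (pre (inv g) A)|exists (pre g A)];
      repeat split; auto; try apply pre_open, oA; apply moves_off_pre; auto. }
  exists c; split.
  - intro i; destruct (Hc i) as [B [-> [oB DB]]].
    split; [exact (reg_RO X op flow_top _)|apply moves_off_reg; auto].
  - intros p Hp; apply NNPP; intro N.
    assert (pc : forall i, p (ro_compl op (c i))).
    { intro i; apply (uf_compl X op p Hp); [|intro pi; apply N; eauto].
      destruct (Hc i) as [B [-> _]]; exact (reg_RO X op flow_top _). }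
    set (W := fun x => ro_compl op (c 0) x /\ ro_compl op (c 1) x /\ ro_compl op (c 2) x).
    apply (uf_nonempty X op p Hp W); [apply (uf_and X op p Hp); auto; apply (uf_and X op p Hp); auto|].
    intros x Wx.
    destruct (maximal_moved_off_dense A (conj oA DA) MA W x) as [y [[n0 [n1 n2]] Ay]]; auto.
    { apply (op_and X op flow_top); [|apply (op_and X op flow_top)]; exact (int_open X op flow_top _). }
    destruct Ay as [a|[a|a]];
      [apply (compl_disj X op _ y n0)|apply (compl_disj X op _ y n1)|apply (compl_disj X op _ y n2)];
      apply open_sub_reg; auto; apply pre_open, oA.
Qed.

End Frolik.

Lemma SG_free_of_essentially_free : essentially_free e op act -> SG_free e op act.
Proof.
  intros Hess g [p Hp] fixed; simpl in fixed; apply NNPP; intro Hg.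
  destruct (frolik_cover Hess g Hg) as [c [Hc cover]].
  destruct (cover p Hp) as [i pi].
  exact (uf_moves_off p g (c i) Hp pi (proj1 (fixed (c i)) pi) (proj2 (Hc i))).
Qed.

End Flow.
Arguments pre {G X} act h U.
Arguments moves_off {G X} act g B.
Arguments displacing_cover {G X} op act g c.

Section MetricTopology.
Local Open Scope R_scope.
Variables (Z : Type) (d : Z -> Z -> R).
Hypothesis Hd : is_metric d.

Definition metric_open (V : Z -> Prop) : Prop :=
  forall z, V z -> exists eps, 0 < eps /\ forall w, d z w < eps -> V w.

Lemma ball_open z r : metric_open (fun w => d z w < r).
Proof.
  destruct Hd as [_ [_ [_ tri]]].
  intros u hu; exists (r - d z u); split; [lra|].
  intros v hv; pose proof (tri z u v); lra.
Qed.

Lemma metric_topology : is_topology metric_open.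
Proof.
  split; [|split; [|split]].
  - intros z _; exists 1; split; [lra|auto].
  - intros z [].
  - intros U V oU oV z [Uz Vz].
    destruct (oU z Uz) as [e1 [p1 h1]], (oV z Vz) as [e2 [p2 h2]].
    exists (Rmin e1 e2); split; [apply Rmin_pos; auto|].
    intros w hw; pose proof (Rmin_l e1 e2); pose proof (Rmin_r e1 e2).
    split; [apply h1|apply h2]; lra.
  - intros F HF z [U [FU Uz]]; destruct (HF U FU z Uz) as [eps [pe h]].
    exists eps; split; auto; intros w hw; exists U; auto.
Qed.

Lemma metric_hausdorff : hausdorff metric_open.
Proof.
  destruct Hd as [nn [zero [sym tri]]].
  intros z w ne.
  assert (pos : 0 < d z w).
  { destruct (Rle_lt_or_eq_dec 0 (d z w) (nn z w)) as [h|h]; auto.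
    exfalso; apply ne, zero; auto. }
  assert (dzz : forall u, d u u = 0) by (intro u; apply zero; reflexivity).
  exists (fun u => d z u < d z w / 2), (fun u => d w u < d z w / 2).
  split; [apply ball_open|split; [apply ball_open|split; [|split]]].
  - rewrite dzz; lra.
  - rewrite dzz; lra.
  - intros u [h1 h2]; pose proof (tri z u w); rewrite (sym w u) in h2; lra.
Qed.

End MetricTopology.
Arguments metric_open {Z} d V.

Section CantorMetric.
Local Open Scope R_scope.

Lemma least_witness (P : nat -> Prop) :
  (exists n, P n) -> exists n, P n /\ forall j, P j -> (n <= j)%nat.
Proof.
  intro H.
  destruct (Wf_nat.dec_inh_nat_subset_has_unique_least_element P (fun n => classic (P n)) H)
    as [n [[Pn Hn] _]]; eauto.
Qed.

Definition half_pow (k : nat) : R := (/ 2) ^ k.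

Lemma half_pow_pos k : 0 < half_pow k.
Proof. apply pow_lt; lra. Qed.

Lemma half_pow_lt j k : (j < k)%nat -> half_pow k < half_pow j.
Proof.
  unfold half_pow; intro H; induction H; simpl.
  - pose proof (half_pow_pos j); unfold half_pow in *; lra.
  - pose proof (half_pow_pos m); unfold half_pow in *; lra.
Qed.

Lemma half_pow_small eps : 0 < eps -> exists k, half_pow k < eps.
Proof.
  intro H; destruct (pow_lt_1_zero (/ 2)) with eps as [N HN]; auto.
  { rewrite Rabs_right; lra. }
  exists N; specialize (HN N (le_n N)); rewrite Rabs_right in HN; auto.
  apply Rle_ge, Rlt_le, half_pow_pos.
Qed.

Definition agree_upto (k : nat) (z w : nat -> Prop) : Prop :=
  forall j, (j <= k)%nat -> (z j <-> w j).

Definition cantor_dist (z w : nat -> Prop) : R :=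
  match excluded_middle_informative (exists n, ~ (z n <-> w n)) with
  | left H => half_pow (proj1_sig (constructive_indefinite_description _ (least_witness _ H)))
  | right _ => 0
  end.

Lemma cantor_dist_spec z w :
  ((forall n, z n <-> w n) /\ cantor_dist z w = 0) \/
  exists k, (forall j, (j < k)%nat -> (z j <-> w j)) /\ ~ (z k <-> w k) /\
            cantor_dist z w = half_pow k.
Proof.
  unfold cantor_dist; destruct excluded_middle_informative as [H|H].
  - right; destruct (constructive_indefinite_description _ _) as [k [nk least]]; simpl.
    exists k; split; [|split; [exact nk|reflexivity]].
    intros j jk; apply NNPP; intro N; specialize (least j N); lia.
  - left; split; auto; intro n; apply NNPP; intro N; apply H; eauto.
Qed.

Lemma cantor_dist_lt k z w : cantor_dist z w < half_pow k <-> agree_upto k z w.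
Proof.
  destruct (cantor_dist_spec z w) as [[A ->]|[k' [A [B ->]]]]; split.
  - intros _ j _; auto.
  - intros _; apply half_pow_pos.
  - intros H j jk; destruct (Compare_dec.le_lt_dec k' j) as [h|h]; [|apply A, h].
    exfalso; destruct (Nat.eq_dec k' k) as [->|nk]; [lra|].
    pose proof (half_pow_lt k' k ltac:(lia)); lra.
  - intros H; apply half_pow_lt; destruct (Compare_dec.le_lt_dec k' k) as [h|h];
      [|exact h]; exfalso; apply B, H, h.
Qed.

Lemma cantor_metric : is_metric cantor_dist.
Proof.
  assert (nn : forall z w, 0 <= cantor_dist z w).
  { intros z w; destruct (cantor_dist_spec z w) as [[_ ->]|[k [_ [_ ->]]]];
      [lra|apply Rlt_le, half_pow_pos]. }
  split; [exact nn|split; [|split]].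
  - intros z w; destruct (cantor_dist_spec z w) as [[A ->]|[k [A [B ->]]]]; split; auto.
    + intros _; apply set_ext, A.
    + intro h; pose proof (half_pow_pos k); lra.
    + intros ->; exfalso; apply B; tauto.
  - intros z w; apply Rle_antisym; apply Rnot_lt_le; intro H.
    + destruct (cantor_dist_spec z w) as [[A E]|[k [A [B E]]]]; rewrite E in H.
      * pose proof (nn w z); lra.
      * apply cantor_dist_lt in H; apply B; symmetry; apply H; auto.
    + destruct (cantor_dist_spec w z) as [[A E]|[k [A [B E]]]]; rewrite E in H.
      * pose proof (nn z w); lra.
      * apply cantor_dist_lt in H; apply B; symmetry; apply H; auto.
  - intros x y z; destruct (cantor_dist_spec x z) as [[A ->]|[k [A [B ->]]]].
    + pose proof (nn x y); pose proof (nn y z); lra.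
    + destruct (Rlt_or_le (cantor_dist x y) (half_pow k)) as [h1|h1];
        [destruct (Rlt_or_le (cantor_dist y z) (half_pow k)) as [h2|h2]|].
      * exfalso; apply cantor_dist_lt in h1, h2; apply B.
        rewrite (h1 k (le_n k)); apply h2; auto.
      * pose proof (nn x y); lra.
      * pose proof (nn y z); lra.
Qed.

End CantorMetric.

Lemma is_metric_sig (Y : Type) (P : Y -> Prop) (d : Y -> Y -> R) :
  is_metric d -> is_metric (fun z w : {y | P y} => d (proj1_sig z) (proj1_sig w)).
Proof.
  intros [nn [zero [sym tri]]]; split; [|split; [|split]]; intros; auto.
  split; [|intros ->; apply zero; reflexivity].
  intro h; apply zero in h; destruct x as [x Px], y as [y Py]; simpl in h; subst y.
  f_equal; apply proof_irrelevance.
Qed.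

Lemma list_choice (A B : Type) (Rel : A -> B -> Prop) (l : list A) :
  (forall a, In a l -> exists b, Rel a b) ->
  exists lb : list B, (forall b, In b lb -> exists a, In a l /\ Rel a b) /\
                      (forall a, In a l -> exists b, In b lb /\ Rel a b).
Proof.
  induction l as [|a l IH]; intro H.
  - exists nil; split; intros _ [].
  - destruct (H a (or_introl eq_refl)) as [b Hb].
    destruct IH as [lb [h1 h2]]; [intros a' h; apply H; right; exact h|].
    exists (b :: lb); split.
    + intros b' [<-|h]; [exists a; split; [left|]; auto|].
      destruct (h1 b' h) as [a' [i r]]; exists a'; split; [right|]; auto.
    + intros a' [<-|h]; [exists b; split; [left|]; auto|].
      destruct (h2 a' h) as [b' [i r]]; exists b'; split; [right|]; auto.
Qed.

Lemma compact_image (A B : Type) (opA : (A -> Prop) -> Prop) (opB : (B -> Prop) -> Prop)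
  (f : A -> B) :
  compact opA -> continuous opA opB f -> (forall y, exists x, f x = y) -> compact opB.
Proof.
  intros cA cf sf F HF Hcov.
  pose (pull := fun (O : A -> Prop) V => F V /\ O = fun a => V (f a)).
  destruct (cA (fun O => exists V, pull O V)) as [l [lF lc]].
  - intros O [V [FV ->]]; apply cf, HF, FV.
  - intro a; destruct (Hcov (f a)) as [V [FV Va]].
    exists (fun a => V (f a)); split; [exists V; split; auto|exact Va].
  - destruct (list_choice _ _ pull l) as [lb [h1 h2]]; [intros O i; apply lF, i|].
    exists lb; split.
    + intros V i; destruct (h1 V i) as [_ [_ [FV _]]]; exact FV.
    + intro y; destruct (sf y) as [a <-]; destruct (lc a) as [O [i Oa]].
      destruct (h2 O i) as [V [iV [_ ->]]]; exists V; auto.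
Qed.

Lemma bounded_prefix (s : nat -> nat) (k : nat) : exists N, forall j, (j <= k)%nat -> (s j <= N)%nat.
Proof.
  induction k as [|k [N HN]].
  - exists (s 0%nat); intros j jk; assert (j = 0%nat) as -> by lia; lia.
  - exists (Nat.max N (s (S k))); intros j jk.
    destruct (Nat.eq_dec j (S k)) as [->|nk]; [lia|specialize (HN j ltac:(lia)); lia].
Qed.

(* The metrizable factor attached to a countable G-invariant family b of
   regular open sets: p |-> {n | b n in p}, a point of the Cantor space
   nat -> Prop.  G acts by reindexing through shift, with
   b (shift g n) = g^{-1} b n. *)
Section TraceFactor.
Variables (G : Type) (mul : G -> G -> G) (inv : G -> G) (e : G).
Hypothesis HG : is_group mul inv e.
Variables (X : Type) (op : (X -> Prop) -> Prop) (act : G -> X -> X).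
Hypothesis Hflow : is_flow mul e op act.
Variables (b : nat -> X -> Prop) (shift : G -> nat -> nat).
Hypothesis b_RO : forall n, regular_open op (b n).
Hypothesis b_shift : forall g n, b (shift g n) = pre act g (b n).

Let Ht := flow_top G mul e X op act Hflow.

Definition trace (p : SG op) : nat -> Prop := fun n => proj1_sig p (b n).

Definition TSpace : Type := { z : nat -> Prop | exists p, z = trace p }.

Definition trace_map (p : SG op) : TSpace := exist _ (trace p) (ex_intro _ p eq_refl).

Definition SG_translate (g : G) (p : SG op) : SG op :=
  exist _ (fun U => proj1_sig p (pre act g U))
    (uf_translate G mul inv e HG X op act Hflow _ g (proj2_sig p)).

Lemma trace_translate g p : trace (SG_translate g p) = fun n => trace p (shift g n).
Proof. unfold trace; simpl; apply set_ext; intro n; rewrite b_shift; tauto. Qed.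

Lemma shift_closed g z :
  (exists p, z = trace p) -> exists p, (fun n => z (shift g n)) = trace p.
Proof. intros [p ->]; exists (SG_translate g p); symmetry; apply trace_translate. Qed.

Definition TAct (g : G) (z : TSpace) : TSpace :=
  exist _ (fun n => proj1_sig z (shift g n)) (shift_closed g _ (proj2_sig z)).

Definition TDist (z w : TSpace) : R := cantor_dist (proj1_sig z) (proj1_sig w).

Definition TOpen : (TSpace -> Prop) -> Prop := metric_open TDist.

Lemma TDist_metric : is_metric TDist.
Proof. apply is_metric_sig, cantor_metric. Qed.

Lemma TSpace_eq (z w : TSpace) : proj1_sig z = proj1_sig w -> z = w.
Proof. destruct z, w; simpl; intros ->; f_equal; apply proof_irrelevance. Qed.

Lemma TAct_e z : TAct e z = z.
Proof.
  apply TSpace_eq; destruct z as [z [p ->]]; simpl.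
  apply set_ext; intro n; unfold trace; rewrite b_shift, (pre_e G mul e X op act Hflow); tauto.
Qed.

Lemma TAct_mul g h z : TAct (mul g h) z = TAct g (TAct h z).
Proof.
  apply TSpace_eq; destruct z as [z [p ->]]; simpl.
  apply set_ext; intro n; unfold trace; rewrite !b_shift, (pre_pre G mul e X op act Hflow); tauto.
Qed.

Lemma TAct_cont g : continuous TOpen TOpen (TAct g).
Proof.
  intros V oV z Vz; destruct (oV _ Vz) as [eps [pe h]].
  destruct (half_pow_small eps pe) as [k hk].
  destruct (bounded_prefix (shift g) k) as [N HN].
  exists (half_pow N); split; [apply half_pow_pos|intros w hw; apply h].
  unfold TDist in *; apply Rlt_trans with (half_pow k); [|exact hk].
  apply cantor_dist_lt; apply cantor_dist_lt in hw.
  intros j jk; apply hw, HN, jk.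
Qed.

Lemma trace_nbhd (p : SG op) k : exists U, regular_open op U /\ proj1_sig p U /\
  forall q : SG op, proj1_sig q U -> agree_upto k (trace p) (trace q).
Proof.
  destruct p as [p Hp]; unfold trace; simpl.
  assert (decide : forall j, exists U, regular_open op U /\ p U /\
            forall q : SG op, proj1_sig q U -> (p (b j) <-> proj1_sig q (b j))).
  { intro j; destruct (classic (p (b j))) as [pb|npb].
    - exists (b j); split; [auto|split; [exact pb|intros q qb; split; intros _; auto]].
    - exists (ro_compl op (b j)); split; [apply ro_compl_RO, RO_open; auto|].
      split; [apply (uf_compl X op p Hp); auto|].
      intros [q Hq] qc; simpl in *; split; intro h; [contradiction|].
      exfalso; exact (uf_not_both X op q Hq _ h qc). }
  induction k as [|k [U [RU [pU HU]]]].
  - destruct (decide 0%nat) as [U [RU [pU HU]]]; exists U; split; [exact RU|split; [exact pU|]].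
    intros q qU j jk; assert (j = 0%nat) as -> by lia; apply HU, qU.
  - destruct (decide (S k)) as [V [RV [pV HV]]].
    exists (fun x => U x /\ V x); split; [apply RO_inter; auto|].
    split; [apply (uf_and X op p Hp); auto|].
    intros [q Hq] qUV j jk.
    assert (qU : q U) by (apply (uf_up X op q Hq _ _ qUV RU); intros x [h _]; exact h).
    assert (qV : q V) by (apply (uf_up X op q Hq _ _ qUV RV); intros x [_ h]; exact h).
    destruct (Nat.eq_dec j (S k)) as [->|nk];
      [exact (HV (exist _ q Hq) qV)|exact (HU (exist _ q Hq) qU j ltac:(lia))].
Qed.

Lemma trace_cont : continuous (SG_open (op := op)) TOpen trace_map.
Proof.
  intros V oV p Vp; destruct (oV _ Vp) as [eps [pe h]].
  destruct (half_pow_small eps pe) as [k hk].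
  destruct (trace_nbhd p k) as [U [RU [pU HU]]].
  exists U; split; [exact RU|split; [exact pU|]]; intros q qU; apply h.
  unfold TDist; apply Rlt_trans with (half_pow k); [|exact hk].
  apply cantor_dist_lt, HU, qU.
Qed.

Lemma trace_surj z : exists p, trace_map p = z.
Proof. destruct z as [z [p ->]]; exists p; apply TSpace_eq; reflexivity. Qed.

Lemma trace_equivariant g p q : SG_act_rel act g p q -> trace_map q = TAct g (trace_map p).
Proof.
  intro H; apply TSpace_eq; simpl; apply set_ext; intro n; unfold trace.
  rewrite (H (b n)), b_shift; tauto.
Qed.

Lemma trace_factor : SG_factor mul inv e op act TOpen TAct /\ metrizable TOpen.
Proof.
  split; [split|].
  - split; [exact (metric_topology _ TDist)|].
    split; [apply (compact_image _ _ _ _ trace_map (SG_compact X op Ht) trace_cont trace_surj)|].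
    split; [exact (metric_hausdorff _ _ TDist_metric)|].
    split; [exact TAct_cont|split; [exact TAct_e|exact TAct_mul]].
  - exists trace_map; split; [exact trace_cont|split; [exact trace_surj|exact trace_equivariant]].
  - exists TDist; split; [exact TDist_metric|intro V; tauto].
Qed.

Lemma trace_free :
  (forall g, g <> e -> exists w : nat -> nat, displacing_cover op act g (fun i => b (w i))) ->
  free_flow e TAct.
Proof.
  intros Hcov g z fixed; apply NNPP; intro ne.
  destruct z as [z [[p Hp] ->]].
  assert (Hz := f_equal (fun u => proj1_sig u) fixed); simpl in Hz.
  destruct (Hcov g ne) as [w [Hw cover]]; destruct (cover p Hp) as [i pi].
  set (P := exist _ p Hp : SG op) in *.
  assert (Hn : trace P (shift g (w i)) = trace P (w i)) by exact (f_equal (fun u => u (w i)) Hz).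
  apply (uf_moves_off G X op act p g (b (w i)) Hp pi); [|apply Hw].
  rewrite <- b_shift; change (trace P (shift g (w i))); rewrite Hn; exact pi.
Qed.

End TraceFactor.

(* For countable G, enumerated by f, the family
     b (a, k, i) = (f a)^{-1} c_{f k, i},
   where c_g is a displacing cover for g, is countable, G-invariant, and
   contains a displacing cover for every g <> e. *)
Section InvariantFamily.
Variables (G : Type) (mul : G -> G -> G) (inv : G -> G) (e : G).
Hypothesis HG : is_group mul inv e.
Variables (X : Type) (op : (X -> Prop) -> Prop) (act : G -> X -> X).
Hypothesis Hflow : is_flow mul e op act.
Hypothesis Hess : essentially_free e op act.
Variable f : nat -> G.
Hypothesis f_onto : forall g, exists n, f n = g.

Lemma cover_exists g : exists c : nat -> X -> Prop,
  (forall i, regular_open op (c i)) /\ (g <> e -> displacing_cover op act g c).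
Proof.
  destruct (classic (g = e)) as [->|ne].
  - exists (fun _ _ => True); split; [intros; apply RO_True, (flow_top G mul e X op act Hflow)|].
    intro ne; contradiction.
  - destruct (frolik_cover G mul inv e HG X op act Hflow Hess g ne) as [c Hc].
    exists c; split; [intro i; apply Hc|intros _; exact Hc].
Qed.

Definition cover (g : G) : nat -> X -> Prop :=
  proj1_sig (constructive_indefinite_description _ (cover_exists g)).

Lemma cover_spec g : (forall i, regular_open op (cover g i)) /\
  (g <> e -> displacing_cover op act g (cover g)).
Proof. exact (proj2_sig (constructive_indefinite_description _ (cover_exists g))). Qed.

Definition index (g : G) : nat := proj1_sig (constructive_indefinite_description _ (f_onto g)).

Lemma index_spec g : f (index g) = g.
Proof. exact (proj2_sig (constructive_indefinite_description _ (f_onto g))). Qed.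

Definition code (a k i : nat) : nat := Cantor.to_nat (a, Cantor.to_nat (k, i)).

Definition family (n : nat) : X -> Prop :=
  let (a, r) := Cantor.of_nat n in let (k, i) := Cantor.of_nat r in
  pre act (f a) (cover (f k) i).

Definition family_shift (g : G) (n : nat) : nat :=
  let (a, r) := Cantor.of_nat n in let (k, i) := Cantor.of_nat r in
  code (index (mul (f a) g)) k i.

Lemma family_code a k i : family (code a k i) = pre act (f a) (cover (f k) i).
Proof. unfold family, code; rewrite !Cantor.cancel_of_to; reflexivity. Qed.

Lemma family_invariant : exists b shift,
  (forall n, regular_open op (b n)) /\
  (forall g n, b (shift g n) = pre act g (b n)) /\
  (forall g, g <> e -> exists w : nat -> nat, displacing_cover op act g (fun i => b (w i))).
Proof.
  exists family, family_shift; split; [|split].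
  - intro n; unfold family; destruct (Cantor.of_nat n) as [a r], (Cantor.of_nat r) as [k i].
    apply (pre_RO G mul inv e HG X op act Hflow), (proj1 (cover_spec (f k))).
  - intros g n; unfold family_shift, family at 2.
    destruct (Cantor.of_nat n) as [a r], (Cantor.of_nat r) as [k i].
    rewrite family_code, index_spec, (pre_pre G mul e X op act Hflow); reflexivity.
  - intros g ne; exists (fun i => code (index e) (index g) i).
    assert (E : (fun i => family (code (index e) (index g) i)) = cover g).
    { apply functional_extensionality; intro i.
      rewrite family_code, !index_spec; apply (pre_e G mul e X op act Hflow). }
    rewrite E; apply cover_spec, ne.
Qed.

End InvariantFamily.

Theorem proposition8p3
  (G : Type) (mul : G -> G -> G) (inv : G -> G) (e : G)
  (HG : is_group mul inv e)
  (X : Type) (op : (X -> Prop) -> Prop) (act : G -> X -> X)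
  (Hflow : is_flow mul e op act)
  (Hmin : minimal_flow op act)
  (Hess : essentially_free e op act) :
  SG_free e op act /\
  (countable_type G ->
    exists (Z : Type) (opZ : (Z -> Prop) -> Prop) (actZ : G -> Z -> Z),
      SG_factor mul inv e op act opZ actZ /\ metrizable opZ /\ free_flow e actZ).
Proof.
  split; [exact (SG_free_of_essentially_free G mul inv e HG X op act Hflow Hess)|].
  intros [f f_onto].
  destruct (family_invariant G mul inv e HG X op act Hflow Hess f f_onto)
    as [b [shift [b_RO [b_shift b_cover]]]].
  destruct (trace_factor G mul inv e HG X op act Hflow b shift b_RO b_shift) as [factor metr].
  exists (TSpace X op b), (TOpen X op b), (TAct G mul inv e HG X op act Hflow b shift b_shift).
  split; [exact factor|split; [exact metr|]].
  exact (trace_free G mul inv e HG X op act Hflow b shift b_shift b_cover).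
Qed.
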